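(* Assume $\mu_1=\mu_2=\mu_3=1$ and fix decision points. (i) If $\mathcal P$ is finite, then the triangle process has finitely many periodic orbits and every trajectory, from any starting point, converges onto one of them. (ii) (Whether or not $\mathcal P$ is finite.) If $z\notin\overline{\mathcal P}$ and the trajectory starting at $z$ converges onto the periodic orbit $u_1,\dots,u_m$, then there is $\varepsilon>0$ such that from every $z'\in\mathcal N_\varepsilon(z)$ there is a unique trajectory, and it converges onto this orbit. (iii) Any periodic orbit $u_1,\dots,u_m$ with $u_n\notin\overline{\mathcal P}$ for every $n$ is stable.
   Context: Fix $\rho_1,\rho_2,\rho_3\in(0,1)$ with $\rho_1+\rho_2+\rho_3>1$, $\mu_i=1$, $\theta:=\rho_1+\rho_2+\rho_3-1$. $A_i^0:=\{y\in\mathbb R^3: y_1+y_2+y_3=1, y_i=0, y_l\ge0\}$, $A^0:=\bigcup_iA_i^0$; for $z\in A^0\setminus A_j^0$, $f_j(z):=\sum_{i\neq j}\frac{(1-\rho_j)z_i+\rho_i z_j}{(1-\rho_j)+\theta z_j}e_i$. For $(\hat i,\hat j,\hat k)$ equal to $(1,2,3)$ or a cyclic permutation, $(1-x)e_{\hat j}+xe_{\hat k}\in A^0_{\hat i}$ is written $(x,\hat i)$, $\pi((x,\hat i)):=x$. $|z-z'|_1:=\|z-z'\|/\sqrt2$. Decision points $d_1,d_2,d_3\in(0,1)$ (identified with $(d_{\hat i},\hat i)$); switching rule $\mathfrak R((x,\hat i))=\hat j$ if $x<d_{\hat i}$, $\hat k$ if $x>d_{\hat i}$, both allowed if $x=d_{\hat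 i}$; $\varphi(z):=f_{\mathfrak R(z)}(z)$. A trajectory is $(z(t))_{t\ge0}$ with $z(t+1)\in\varphi(z(t))$. $z$ is a pre-image of $z'$ if some trajectory from $z$ has $z(t)=z'$ for some $t\ge1$. $\mathcal P$ is the set consisting of the decision points and all their pre-images; $\overline{\mathcal P}$ its closure. Periodic orbit: $u_1,\dots,u_m$ with $u_{n+1}\in\varphi(u_n)$, $u_1\in\varphi(u_m)$. A trajectory converges onto it if there is $n_0$ with $|z(mt+n+n_0)-u_n|_1\to0$ ($t\to\infty$) for each $n$. For $z=(x,\hat i)$, $\mathcal N_\varepsilon(z):=\{z'\in A^0_{\hat i}:|\pi(z')-x|<\varepsilon\}$. An orbit is stable if for each $n$ there is $\varepsilon>0$ such that all trajectories from any $z\in\mathcal N_\varepsilon(u_n)$ converge onto the orbit. *)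

From Stdlib Require Import Reals Lra List.
Open Scope R_scope.

Inductive idx := I1 | I2 | I3.

Definition idx_eq_dec (i j : idx) : {i = j} + {i <> j}.
Proof. decide equality. Defined.

Definition pt := idx -> R.

Definition succ (i : idx) : idx :=
  match i with I1 => I2 | I2 => I3 | I3 => I1 end.

Definition theta (rho : idx -> R) : R := rho I1 + rho I2 + rho I3 - 1.

Definition InA (i : idx) (z : pt) : Prop :=
  z I1 + z I2 + z I3 = 1 /\ z i = 0 /\ (forall l, 0 <= z l).
Definition InA0 (z : pt) : Prop := exists i, InA i z.

(* f_j (mu_i = 1) *)
Definition f (rho : idx -> R) (j : idx) (z : pt) : pt :=
  fun i => if idx_eq_dec i j then 0
           else ((1 - rho j) * z i + rho i * z j) / ((1 - rho j) + theta rho * z j).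

(* (x, i) := (1-x) e_{succ i} + x e_{succ (succ i)} in A_i^0 *)
Definition param (x : R) (i : idx) : pt :=
  fun l => if idx_eq_dec l (succ i) then 1 - x
           else if idx_eq_dec l (succ (succ i)) then x else 0.

Definition Rep (z : pt) (x : R) (i : idx) : Prop :=
  0 <= x <= 1 /\ z = param x i.

Definition Rule (d : idx -> R) (z : pt) (j : idx) : Prop :=
  exists i x, Rep z x i /\
    ((x < d i /\ j = succ i) \/ (x > d i /\ j = succ (succ i)) \/
     (x = d i /\ (j = succ i \/ j = succ (succ i)))).

Definition Step (rho d : idx -> R) (z z' : pt) : Prop :=
  exists j, Rule d z j /\ ~ InA j z /\ z' = f rho j z.

Definition Trajectory (rho d : idx -> R) (tr : nat -> pt) : Prop :=
  forall t, Step rho d (tr t) (tr (S t)).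

Definition dist1 (z z' : pt) : R :=
  sqrt ((z I1 - z' I1)^2 + (z I2 - z' I2)^2 + (z I3 - z' I3)^2) / sqrt 2.

Definition DecisionPoint (d : idx -> R) (z : pt) : Prop :=
  exists i, z = param (d i) i.

Definition Preimage (rho d : idx -> R) (z z' : pt) : Prop :=
  exists tr, Trajectory rho d tr /\ tr O = z /\
    exists t, (1 <= t)%nat /\ tr t = z'.

Definition InP (rho d : idx -> R) (z : pt) : Prop :=
  DecisionPoint d z \/ exists p, DecisionPoint d p /\ Preimage rho d z p.

Definition FiniteP (rho d : idx -> R) : Prop :=
  exists L : list pt, forall z, InP rho d z -> In z L.

Definition InClosureP (rho d : idx -> R) (z : pt) : Prop :=
  forall eps, 0 < eps -> exists p, InP rho d p /\ dist1 z p < eps.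

(* periodic orbit u_0, ..., u_{m-1} (0-based indexing of u_1..u_m) *)
Definition PeriodicOrbit (rho d : idx -> R) (m : nat) (u : nat -> pt) : Prop :=
  (1 <= m)%nat /\
  (forall n, (S n < m)%nat -> Step rho d (u n) (u (S n))) /\
  Step rho d (u (m - 1)%nat) (u O).

Definition ConvergesOnto (tr : nat -> pt) (m : nat) (u : nat -> pt) : Prop :=
  exists n0 : nat, forall n, (n < m)%nat ->
    Un_cv (fun t => dist1 (tr (m * t + n + n0)%nat) (u n)) 0.

(* z' ∈ N_eps(z) (for any way of writing z = (x, i)) *)
Definition Nbhd (eps : R) (z z' : pt) : Prop :=
  exists i x x', Rep z x i /\ Rep z' x' i /\ Rabs (x' - x) < eps.

Definition Stable (rho d : idx -> R) (m : nat) (u : nat -> pt) : Prop :=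
  forall n, (n < m)%nat -> exists eps, 0 < eps /\
    forall z tr, Nbhd eps (u n) z -> Trajectory rho d tr -> tr O = z ->
      ConvergesOnto tr m u.

From Pilot Require Import Defs.
From Stdlib Require Import Reals List.
Open Scope R_scope.
From Stdlib Require Import Lra Psatz FunctionalExtensionality Classical ClassicalEpsilon.

(* On an edge of the triangle the dynamics is one of two decreasing Moebius maps, chosen by the
   side of the decision point.  If a segment of an edge contains no point of P, its endpoints use
   the same branch (the decision point lies in P) and its image again avoids P (a point of P in the
   image would have a preimage in P on the segment).  Both branches contract [hgap], a monotone
   function of the Hilbert distance of the edge, by a uniform factor, so two trajectories started
   on a P-free segment approach each other geometrically.  This gives (ii): a point outside the
   closure of P has a P-free neighbourhood, on which the dynamics is moreover single-valued; and
   (iii) follows by applying (ii) along the orbit.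
   For (i), a finite P cuts the edges into finitely many P-free intervals.  Two periodic points in
   one interval coincide by contraction.  A trajectory that leaves P never returns to it and visits
   some interval twice; its return subsequences are then Cauchy and their limits form a periodic
   orbit.  A trajectory staying in the finite set P is periodic, as the dynamics is injective
   backwards. *)

Lemma Rdiv_lt_l a b c : 0 < b -> a < c * b -> a / b < c.
Proof. intros Hb H. apply Rmult_lt_reg_r with b; auto. unfold Rdiv. rewrite Rmult_assoc, Rinv_l; lra. Qed.

Lemma Rdiv_le_l a b c : 0 < b -> a <= c * b -> a / b <= c.
Proof. intros Hb H. apply Rmult_le_reg_r with b; auto. unfold Rdiv. rewrite Rmult_assoc, Rinv_l; lra. Qed.

Lemma Rdiv_le_r a b c : 0 < b -> c * b <= a -> c <= a / b.
Proof. intros Hb H. apply Rmult_le_reg_r with b; auto. unfold Rdiv. rewrite Rmult_assoc, Rinv_l; lra. Qed.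

Lemma Rdiv_nonneg a b : 0 <= a -> 0 < b -> 0 <= a / b.
Proof. intros; apply Rdiv_le_r; lra. Qed.

Lemma pow2_le_reg x y : 0 <= y -> x ^ 2 <= y ^ 2 -> x <= y.
Proof. intros. destruct (Rle_dec x y); auto. nra. Qed.

Lemma Rabs_le_of_sqr_le z E r n : 0 <= E -> 0 <= r -> z ^ 2 <= E * (r * r) ^ n -> Rabs z <= sqrt E * r ^ n.
Proof.
  intros HE Hr H. apply pow2_le_reg; [apply Rmult_le_pos; [apply sqrt_pos | apply pow_le; lra]|].
  rewrite pow2_abs. replace ((sqrt E * r ^ n) ^ 2) with (sqrt E ^ 2 * (r * r) ^ n)
    by (rewrite (Rpow_mult_distr r r n); ring).
  rewrite pow2_sqrt by lra. lra.
Qed.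

Lemma pow_le_pow_of_le_1 x m n : 0 <= x <= 1 -> (m <= n)%nat -> x ^ n <= x ^ m.
Proof.
  intros Hx Hmn. induction Hmn; [lra|].
  simpl. pose proof (pow_le x m0 ltac:(lra)). nra.
Qed.

Lemma Un_cv_const c : Un_cv (fun _ => c) c.
Proof. intros eps He. exists O. intros. unfold R_dist. rewrite Rminus_diag, Rabs_R0. auto. Qed.

Lemma Un_cv_ext (a b : nat -> R) l : (forall n, a n = b n) -> Un_cv a l -> Un_cv b l.
Proof. intros E H eps He. destruct (H eps He) as [N HN]. exists N. intros n Hn. rewrite <- E. auto. Qed.

Lemma Un_cv_0_squeeze (a b : nat -> R) : Un_cv b 0 -> (forall n, 0 <= a n <= b n) -> Un_cv a 0.
Proof.
  intros Hb Hab eps He. destruct (Hb eps He) as [N HN]. exists N. intros n Hn.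
  specialize (HN n Hn). specialize (Hab n). unfold R_dist in *.
  rewrite Rminus_0_r in *. rewrite Rabs_pos_eq in * by lra. lra.
Qed.

Lemma Un_cv_0_plus (a b : nat -> R) : Un_cv a 0 -> Un_cv b 0 -> Un_cv (fun n => a n + b n) 0.
Proof. intros Ha Hb. rewrite <- (Rplus_0_r 0). apply CV_plus; auto. Qed.

Lemma Un_cv_0_subseq (a : nat -> R) (phi : nat -> nat) : Un_cv a 0 -> (forall n, (n <= phi n)%nat) ->
  Un_cv (fun n => a (phi n)) 0.
Proof.
  intros Ha Hp eps He. destruct (Ha eps He) as [N HN]. exists N. intros n Hn.
  apply HN. specialize (Hp n). lia.
Qed.

Lemma Un_cv_0_of_shift (a : nat -> R) : Un_cv (fun n => a (S n)) 0 -> Un_cv a 0.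
Proof.
  intros H eps He. destruct (H eps He) as [N HN]. exists (S N). intros n Hn.
  destruct n; [lia|]. apply HN. lia.
Qed.

Lemma Un_cv_geom_0 M k : 0 <= k < 1 -> Un_cv (fun n => M * k ^ n) 0.
Proof.
  intros Hk. rewrite <- (Rmult_0_r M). apply CV_mult; [apply Un_cv_const|].
  intros eps He. destruct (pow_lt_1_zero k ltac:(rewrite Rabs_pos_eq; lra) eps He) as [N HN].
  exists N. intros n Hn. unfold R_dist. rewrite Rminus_0_r. auto.
Qed.

Lemma Un_cv_0_dist (b : nat -> R) l L : Un_cv b l -> Un_cv (fun k => L * Rabs (b k - l)) 0.
Proof.
  intros Hb. rewrite <- (Rmult_0_r L). apply CV_mult; [apply Un_cv_const|].
  rewrite <- Rabs_R0, <- (Rminus_diag l). apply cv_cvabs, CV_minus; auto using Un_cv_const.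
Qed.

Lemma geom_tail_bound (b : nat -> R) C q : 0 <= q < 1 ->
  (forall k, Rabs (b k - b (S k)) <= C * q ^ k) ->
  forall k l, Rabs (b k - b (k + l)%nat) <= C * q ^ k * (1 - q ^ l) / (1 - q).
Proof.
  intros Hq Hb k l. induction l.
  - rewrite Nat.add_0_r, Rminus_diag, Rabs_R0. simpl.
    replace (C * q ^ k * (1 - 1) / (1 - q)) with 0 by (field; lra). lra.
  - replace (b k - b (k + S l)%nat) with ((b k - b (k + l)%nat) + (b (k + l)%nat - b (S (k + l)))).
    2:{ replace (k + S l)%nat with (S (k + l)) by lia. ring. }
    eapply Rle_trans; [apply Rabs_triang|].
    pose proof (Hb (k + l)%nat). rewrite pow_add in H.
    replace (C * q ^ k * (1 - q ^ S l) / (1 - q)) with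
      (C * q ^ k * (1 - q ^ l) / (1 - q) + C * (q ^ k * q ^ l)) by (simpl; field; lra).
    lra.
Qed.

Lemma geom_Cauchy_crit (b : nat -> R) C q : 0 <= q < 1 -> 0 <= C ->
  (forall k, Rabs (b k - b (S k)) <= C * q ^ k) -> Cauchy_crit b.
Proof.
  intros Hq HC Hb eps He.
  assert (Hy : 0 < eps * (1 - q) / (C + 1)) by (apply Rdiv_lt_0_compat; [apply Rmult_lt_0_compat|]; lra).
  destruct (pow_lt_1_zero q ltac:(rewrite Rabs_pos_eq; lra) _ Hy) as [N HN].
  assert (Hgen : forall n m, (n >= N)%nat -> (n <= m)%nat -> Rabs (b n - b m) < eps).
  { intros n m Hn Hnm. replace m with (n + (m - n))%nat by lia.
    eapply Rle_lt_trans; [apply (geom_tail_bound b C q Hq Hb)|].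
    specialize (HN n Hn). rewrite Rabs_pos_eq in HN by (apply pow_le; lra).
    pose proof (pow_le q (m - n) ltac:(lra)).
    apply Rdiv_lt_l; [lra|].
    assert (C * q ^ n <= C * (eps * (1 - q) / (C + 1))) by (apply Rmult_le_compat_l; lra).
    assert (C * (eps * (1 - q) / (C + 1)) < eps * (1 - q)).
    { replace (C * (eps * (1 - q) / (C + 1))) with (eps * (1 - q) * (C / (C + 1))) by (field; lra).
      assert (C / (C + 1) < 1) by (apply Rdiv_lt_l; lra).
      assert (0 < eps * (1 - q)) by nra. nra. }
    assert (0 <= C * q ^ n) by (apply Rmult_le_pos; [lra | apply pow_le; lra]).
    assert (0 <= C * q ^ n * q ^ (m - n)) by (apply Rmult_le_pos; lra).
    lra. }
  exists N. intros n m Hn Hm. unfold R_dist.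
  destruct (Nat.le_ge_cases n m).
  - apply Hgen; auto.
  - rewrite <- Rabs_Ropp, Ropp_minus_distr. apply Hgen; auto.
Qed.

Lemma pigeonhole_window (A : Type) (f : nat -> A) (L : list A) t :
  (forall k, (t <= k <= t + length L)%nat -> In (f k) L) ->
  exists a b, (t <= a)%nat /\ (a < b)%nat /\ (b <= t + length L)%nat /\ f a = f b.
Proof.
  intros HL. apply NNPP. intros Hno.
  assert (HND : NoDup (map f (seq t (S (length L))))).
  { apply NoDup_map_NoDup_ForallPairs; [|apply seq_NoDup].
    intros a b Ha Hb Hf. apply in_seq in Ha. apply in_seq in Hb.
    destruct (Nat.lt_trichotomy a b) as [Hab|[Hab|Hab]]; auto; exfalso; apply Hno.
    - exists a, b. repeat split; try lia; auto.
    - exists b, a. repeat split; try lia; auto. }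
  assert (Hinc : incl (map f (seq t (S (length L)))) L).
  { intros x Hx. apply in_map_iff in Hx. destruct Hx as [k [<- Hk]]. apply in_seq in Hk.
    apply HL. lia. }
  pose proof (NoDup_incl_length HND Hinc). rewrite length_map, length_seq in H. lia.
Qed.

Lemma bounded_witness_uniform (P : nat -> nat -> Prop) N :
  (forall T, exists q, (q <= N)%nat /\ P q T) ->
  (forall q T T', (T' <= T)%nat -> P q T -> P q T') ->
  exists q, (q <= N)%nat /\ forall T, P q T.
Proof.
  intros Hex Hanti. induction N as [|N IH].
  - exists O. split; auto. intros T. destruct (Hex T) as [q [Hq HP]].
    replace q with O in HP by lia. auto.
  - destruct (classic (forall T, P (S N) T)) as [Hall|Hnot]; [exists (S N); auto|].
    apply not_all_ex_not in Hnot. destruct Hnot as [T0 HT0].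
    destruct IH as [q [Hq HP]]; [|exists q; split; auto].
    intros T. destruct (Hex (Nat.max T T0)) as [q [Hq HP]].
    destruct (Nat.eq_dec q (S N)) as [->|Hne].
    + exfalso. apply HT0. apply (Hanti _ (Nat.max T T0)); auto. lia.
    + exists q. split; [lia|]. apply (Hanti _ (Nat.max T T0)); auto. lia.
Qed.

Lemma filter_length_mono (A : Type) (f g : A -> bool) l :
  (forall x, In x l -> f x = true -> g x = true) ->
  (length (filter f l) <= length (filter g l))%nat.
Proof.
  induction l as [|a l IH]; intros H; simpl; auto.
  assert (length (filter f l) <= length (filter g l))%nat by (apply IH; intros; apply H; simpl; auto).
  destruct (f a) eqn:Ef.
  - rewrite (H a (or_introl eq_refl) Ef). simpl. lia.
  - destruct (g a); simpl; lia.
Qed.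

Lemma filter_length_mono_strict (A : Type) (f g : A -> bool) l :
  (forall x, In x l -> f x = true -> g x = true) ->
  (exists x, In x l /\ g x = true /\ f x = false) ->
  (length (filter f l) < length (filter g l))%nat.
Proof.
  induction l as [|a l IH]; intros H [x [Hx [Hg Hf]]]; simpl in *; [contradiction|].
  assert (length (filter f l) <= length (filter g l))%nat by (apply filter_length_mono; auto).
  destruct Hx as [<-|Hx].
  - rewrite Hf, Hg. simpl. lia.
  - assert (length (filter f l) < length (filter g l))%nat by (apply IH; eauto).
    destruct (f a) eqn:Ef.
    + rewrite (H a (or_introl eq_refl) Ef). simpl. lia.
    + destruct (g a); simpl; lia.
Qed.

Lemma sqrt_sum3_triangle x1 x2 x3 y1 y2 y3 :
  sqrt ((x1 + y1)^2 + (x2 + y2)^2 + (x3 + y3)^2) <=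
  sqrt (x1^2 + x2^2 + x3^2) + sqrt (y1^2 + y2^2 + y3^2).
Proof.
  set (X := x1^2 + x2^2 + x3^2). set (Y := y1^2 + y2^2 + y3^2).
  set (P := x1 * y1 + x2 * y2 + x3 * y3).
  assert (HX : 0 <= X) by (unfold X; nra). assert (HY : 0 <= Y) by (unfold Y; nra).
  assert (Hcs : P <= sqrt (X * Y)).
  { destruct (Rle_dec P 0). { pose proof (sqrt_pos (X * Y)). lra. }
    apply pow2_le_reg; [apply sqrt_pos|]. rewrite pow2_sqrt by nra.
    assert (X * Y - P^2 = (x1*y2 - x2*y1)^2 + (x2*y3 - x3*y2)^2 + (x1*y3 - x3*y1)^2)
      by (unfold X, Y, P; ring).
    pose proof (pow2_ge_0 (x1*y2 - x2*y1)). pose proof (pow2_ge_0 (x2*y3 - x3*y2)).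
    pose proof (pow2_ge_0 (x1*y3 - x3*y1)). lra. }
  apply pow2_le_reg; [pose proof (sqrt_pos X); pose proof (sqrt_pos Y); lra|].
  rewrite pow2_sqrt by (pose proof (pow2_ge_0 (x1 + y1)); pose proof (pow2_ge_0 (x2 + y2));
                        pose proof (pow2_ge_0 (x3 + y3)); lra).
  replace ((sqrt X + sqrt Y)^2) with (X + Y + 2 * (sqrt X * sqrt Y)) by
    (simpl; rewrite !Rmult_1_r; rewrite <- (sqrt_sqrt X HX) at 1; rewrite <- (sqrt_sqrt Y HY) at 1; ring).
  rewrite <- sqrt_mult by auto. unfold X, Y, P in *. nra.
Qed.

Lemma sqrt2_pos : 0 < sqrt 2.
Proof. apply sqrt_lt_R0; lra. Qed.

Lemma dist1_nonneg v w : 0 <= dist1 v w.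
Proof. apply Rdiv_nonneg; [apply sqrt_pos | apply sqrt2_pos]. Qed.

Lemma dist1_sym v w : dist1 v w = dist1 w v.
Proof. unfold dist1. do 2 f_equal. ring. Qed.

Lemma dist1_diag v : dist1 v v = 0.
Proof. unfold dist1. rewrite !Rminus_diag. replace (0 ^ 2 + 0 ^ 2 + 0 ^ 2) with 0 by ring. rewrite sqrt_0. apply Rdiv_0_l. Qed.

Lemma dist1_triangle u v w : dist1 u w <= dist1 u v + dist1 v w.
Proof.
  unfold dist1, Rdiv. rewrite <- Rmult_plus_distr_r. apply Rmult_le_compat_r.
  { apply Rlt_le, Rinv_0_lt_compat, sqrt2_pos. }
  replace (u I1 - w I1) with ((u I1 - v I1) + (v I1 - w I1)) by ring.
  replace (u I2 - w I2) with ((u I2 - v I2) + (v I2 - w I2)) by ring.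
  replace (u I3 - w I3) with ((u I3 - v I3) + (v I3 - w I3)) by ring.
  apply sqrt_sum3_triangle.
Qed.

Lemma dist1_eq_0 v w : dist1 v w = 0 -> v = w.
Proof.
  intros H. unfold dist1 in H. pose proof sqrt2_pos.
  assert (Hs : sqrt ((v I1 - w I1) ^ 2 + (v I2 - w I2) ^ 2 + (v I3 - w I3) ^ 2) = 0).
  { unfold Rdiv in H. apply Rmult_integral in H. destruct H as [H|H]; auto.
    pose proof (Rinv_0_lt_compat _ H0). lra. }
  pose proof (pow2_ge_0 (v I1 - w I1)). pose proof (pow2_ge_0 (v I2 - w I2)).
  pose proof (pow2_ge_0 (v I3 - w I3)).
  apply sqrt_eq_0 in Hs; [|lra].
  apply functional_extensionality; intros l. destruct l; nra.
Qed.

Lemma dist1_param a b i : dist1 (param a i) (param b i) = Rabs (a - b).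
Proof.
  unfold dist1.
  replace ((param a i I1 - param b i I1) ^ 2 + (param a i I2 - param b i I2) ^ 2
           + (param a i I3 - param b i I3) ^ 2) with (2 * (a - b)²)
    by (destruct i; unfold param, Rsqr; simpl; ring).
  rewrite sqrt_mult_alt by lra. rewrite sqrt_Rsqr_abs.
  field. apply Rgt_not_eq, sqrt2_pos.
Qed.

Lemma Un_cv_dist1_unique (a : nat -> pt) v w :
  Un_cv (fun k => dist1 (a k) v) 0 -> Un_cv (fun k => dist1 (a k) w) 0 -> v = w.
Proof.
  intros Hv Hw. apply dist1_eq_0, (UL_sequence (fun _ => dist1 v w)); [apply Un_cv_const|].
  apply Un_cv_0_squeeze with (fun k => dist1 (a k) v + dist1 (a k) w).
  - apply Un_cv_0_plus; auto.
  - intros k. split; [apply dist1_nonneg|]. rewrite (dist1_sym (a k) v). apply dist1_triangle.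
Qed.

Lemma converges_onto_transfer tr1 tr2 m u : ConvergesOnto tr1 m u ->
  Un_cv (fun n => dist1 (tr1 n) (tr2 n)) 0 -> ConvergesOnto tr2 m u.
Proof.
  intros [n0 Hc] Hd. exists n0. intros n Hn.
  apply Un_cv_0_squeeze with (fun t => dist1 (tr1 (m * t + n + n0)%nat) (tr2 (m * t + n + n0)%nat) +
                                       dist1 (tr1 (m * t + n + n0)%nat) (u n)).
  - apply Un_cv_0_plus; [|apply Hc; auto].
    apply (Un_cv_0_subseq (fun s => dist1 (tr1 s) (tr2 s)) (fun t => (m * t + n + n0)%nat)); auto.
    intros t. nia.
  - intros t. split; [apply dist1_nonneg|].
    rewrite (dist1_sym (tr1 _) (tr2 _)). apply dist1_triangle.
Qed.

Definition between a b x := (a <= x <= b) \/ (b <= x <= a).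

Lemma between_l a b : between a b a.
Proof. unfold between; destruct (Rle_dec a b); [left|right]; lra. Qed.

Lemma decreasing_between_preimage (g : R -> R) :
  (forall a b, 0 <= a -> a < b -> b <= 1 -> g b < g a) ->
  (forall y, g 1 <= y <= g 0 -> exists x, 0 <= x <= 1 /\ g x = y) ->
  forall a b y, 0 <= a <= 1 -> 0 <= b <= 1 -> between (g a) (g b) y ->
  exists x, between a b x /\ g x = y.
Proof.
  intros Hdec Honto.
  assert (Hmono : forall a b, 0 <= a -> a <= b -> b <= 1 -> g b <= g a).
  { intros a b H1 H2 H3. destruct (Req_dec a b); [subst; lra|]. apply Rlt_le, Hdec; lra. }
  intros a b y Ha Hb Hy.
  assert (Hr : g 1 <= y <= g 0).
  { pose proof (Hmono a 1). pose proof (Hmono 0 a). pose proof (Hmono b 1). pose proof (Hmono 0 b).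
    unfold between in Hy. lra. }
  destruct (Honto y Hr) as [x [Hx Hgx]]. exists x; split; auto.
  unfold between in *.
  assert (Hcmp : forall u, 0 <= u <= 1 -> (g u <= y -> x <= u) /\ (y <= g u -> u <= x)).
  { intros u Hu. split; intros Hle.
    - destruct (Rle_dec x u); auto. pose proof (Hdec u x). lra.
    - destruct (Rle_dec u x); auto. pose proof (Hdec x u). lra. }
  pose proof (Hcmp a Ha). pose proof (Hcmp b Hb). lra.
Qed.

Definition excess ri rj rk := ri + rj + rk - 1.

(* The two branches of the dynamics in the coordinate of an edge (see [f_param] below):
   [mapL] is used left of the decision point, [mapR] right of it. *)
Definition mapL ri rj rk x := ri * (1 - x) / ((1 - rj) + excess ri rj rk * (1 - x)).
Definition mapR ri rj rk x := ((1 - rj) * (1 - x) + rk * x) / ((1 - rj) + excess ri rj rk * x).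

(* [hgap a b = 4 sinh^2 (delta / 2)] for the Hilbert distance [delta] of [(0,1)];
   the branches are strict contractions for it away from the endpoints. *)
Definition hgap a b := (a - b)^2 / (a * (1 - a) * (b * (1 - b))).

Definition gainL rj rk x := (1 - rj) * x / ((1 - rj) * x + rk * (1 - x)).
Definition gainR rj rk x := (1 - rj) * (1 - x) / ((1 - rj) * (1 - x) + rk * x).

Section EdgeMaps.
Variables ri rj rk : R.
Hypothesis Hi : 0 < ri < 1.
Hypothesis Hj : 0 < rj < 1.
Hypothesis Hk : 0 < rk < 1.
Hypothesis Hs : ri + rj + rk > 1.

Lemma denom_ge t : 0 <= t <= 1 -> 1 - rj <= (1 - rj) + excess ri rj rk * t.
Proof. intros; unfold excess; nra. Qed.

Lemma mapL_range x : 0 <= x < 1 -> 0 < mapL ri rj rk x < 1.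
Proof.
  intros Hx. pose proof (denom_ge (1 - x) ltac:(lra)). unfold mapL, excess in *. split.
  - apply Rdiv_lt_0_compat; nra.
  - apply Rdiv_lt_l; nra.
Qed.

Lemma mapR_range x : 0 < x <= 1 -> 0 < mapR ri rj rk x < 1.
Proof.
  intros Hx. pose proof (denom_ge x ltac:(lra)). unfold mapR, excess in *. split.
  - apply Rdiv_lt_0_compat; nra.
  - apply Rdiv_lt_l; nra.
Qed.

Lemma mapL_sub a b : 0 <= a <= 1 -> 0 <= b <= 1 ->
  mapL ri rj rk a - mapL ri rj rk b =
  (b - a) * (ri * (1 - rj)) / (((1 - rj) + excess ri rj rk * (1 - a)) * ((1 - rj) + excess ri rj rk * (1 - b))).
Proof.
  intros Ha Hb. pose proof (denom_ge (1 - a) ltac:(lra)). pose proof (denom_ge (1 - b) ltac:(lra)).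
  unfold mapL. field. lra.
Qed.

Lemma mapR_sub a b : 0 <= a <= 1 -> 0 <= b <= 1 ->
  mapR ri rj rk a - mapR ri rj rk b =
  (b - a) * (ri * (1 - rj)) / (((1 - rj) + excess ri rj rk * a) * ((1 - rj) + excess ri rj rk * b)).
Proof.
  intros Ha Hb. pose proof (denom_ge a Ha). pose proof (denom_ge b Hb).
  unfold mapR, excess in *. field. lra.
Qed.

Lemma sub_ratio_bound a b D1 D2 : 1 - rj <= D1 -> 1 - rj <= D2 ->
  Rabs ((b - a) * (ri * (1 - rj)) / (D1 * D2)) <= ri / (1 - rj) * Rabs (a - b).
Proof.
  intros H1 H2.
  replace ((b - a) * (ri * (1 - rj)) / (D1 * D2)) with
    (- (a - b) * (ri / (1 - rj) * ((1 - rj) / D1) * ((1 - rj) / D2))) by (field; lra).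
  assert (0 <= (1 - rj) / D1 <= 1) by (split; [apply Rdiv_nonneg | apply Rdiv_le_l]; lra).
  assert (0 <= (1 - rj) / D2 <= 1) by (split; [apply Rdiv_nonneg | apply Rdiv_le_l]; lra).
  assert (0 <= ri / (1 - rj)) by (apply Rdiv_nonneg; lra).
  set (K := ri / (1 - rj)) in *. set (u := (1 - rj) / D1) in *. set (v := (1 - rj) / D2) in *.
  assert (0 <= K * u <= K) by (split; [apply Rmult_le_pos | rewrite <- (Rmult_1_r K) at 2; apply Rmult_le_compat_l]; lra).
  assert (0 <= K * u * v <= K) by (split; [apply Rmult_le_pos | rewrite <- (Rmult_1_r K) at 2; apply Rmult_le_compat]; lra).
  rewrite Rabs_mult, Rabs_Ropp, (Rabs_pos_eq (K * u * v)) by lra.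
  pose proof (Rabs_pos (a - b)). nra.
Qed.

Lemma mapL_lipschitz a b : 0 <= a <= 1 -> 0 <= b <= 1 ->
  Rabs (mapL ri rj rk a - mapL ri rj rk b) <= ri / (1 - rj) * Rabs (a - b).
Proof. intros. rewrite mapL_sub by auto. apply sub_ratio_bound; apply denom_ge; lra. Qed.

Lemma mapR_lipschitz a b : 0 <= a <= 1 -> 0 <= b <= 1 ->
  Rabs (mapR ri rj rk a - mapR ri rj rk b) <= ri / (1 - rj) * Rabs (a - b).
Proof. intros. rewrite mapR_sub by auto. apply sub_ratio_bound; apply denom_ge; lra. Qed.

Lemma mapL_decreasing a b : 0 <= a -> a < b -> b <= 1 -> mapL ri rj rk b < mapL ri rj rk a.
Proof.
  intros. pose proof (mapL_sub a b ltac:(lra) ltac:(lra)).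
  pose proof (denom_ge (1 - a) ltac:(lra)). pose proof (denom_ge (1 - b) ltac:(lra)).
  enough (0 < (b - a) * (ri * (1 - rj)) / (((1 - rj) + excess ri rj rk * (1 - a)) * ((1 - rj) + excess ri rj rk * (1 - b)))) by lra.
  apply Rdiv_lt_0_compat; repeat apply Rmult_lt_0_compat; lra.
Qed.

Lemma mapR_decreasing a b : 0 <= a -> a < b -> b <= 1 -> mapR ri rj rk b < mapR ri rj rk a.
Proof.
  intros. pose proof (mapR_sub a b ltac:(lra) ltac:(lra)).
  pose proof (denom_ge a ltac:(lra)). pose proof (denom_ge b ltac:(lra)).
  enough (0 < (b - a) * (ri * (1 - rj)) / (((1 - rj) + excess ri rj rk * a) * ((1 - rj) + excess ri rj rk * b))) by lra.
  apply Rdiv_lt_0_compat; repeat apply Rmult_lt_0_compat; lra.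
Qed.

Lemma mapL_onto y : mapL ri rj rk 1 <= y <= mapL ri rj rk 0 ->
  exists x, 0 <= x <= 1 /\ mapL ri rj rk x = y.
Proof.
  intros Hy. unfold mapL, excess in *.
  replace (ri * (1 - 1) / (1 - rj + (ri + rj + rk - 1) * (1 - 1))) with 0 in Hy by (field; lra).
  replace (ri * (1 - 0) / (1 - rj + (ri + rj + rk - 1) * (1 - 0))) with (ri / (ri + rk)) in Hy by (field; lra).
  assert (Hy2 : y * (ri + rk) <= ri).
  { destruct Hy as [_ Hy]. apply Rmult_le_reg_r with (/ (ri + rk)).
    - apply Rinv_0_lt_compat; lra.
    - rewrite Rmult_assoc, Rinv_r by lra. lra. }
  assert (Hden : 0 < ri - (ri + rj + rk - 1) * y) by nra.
  exists (1 - y * (1 - rj) / (ri - (ri + rj + rk - 1) * y)).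
  assert (0 <= y * (1 - rj) / (ri - (ri + rj + rk - 1) * y)) by (apply Rdiv_nonneg; nra).
  assert (y * (1 - rj) / (ri - (ri + rj + rk - 1) * y) <= 1) by (apply Rdiv_le_l; nra).
  split; [lra|]. field. split; [lra|]. nra.
Qed.

Lemma mapR_onto y : mapR ri rj rk 1 <= y <= mapR ri rj rk 0 ->
  exists x, 0 <= x <= 1 /\ mapR ri rj rk x = y.
Proof.
  intros Hy. unfold mapR, excess in *.
  replace (((1 - rj) * (1 - 1) + rk * 1) / (1 - rj + (ri + rj + rk - 1) * 1)) with (rk / (ri + rk)) in Hy by (field; lra).
  replace (((1 - rj) * (1 - 0) + rk * 0) / (1 - rj + (ri + rj + rk - 1) * 0)) with 1 in Hy by (field; lra).
  assert (Hy2 : rk <= y * (ri + rk)).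
  { destruct Hy as [Hy _]. apply Rmult_le_reg_r with (/ (ri + rk)).
    - apply Rinv_0_lt_compat; lra.
    - rewrite Rmult_assoc, Rinv_r by lra. lra. }
  assert (Hden : 0 < y * (ri + rj + rk - 1) + (1 - rj) - rk) by nra.
  exists ((1 - rj) * (1 - y) / (y * (ri + rj + rk - 1) + (1 - rj) - rk)).
  assert (0 <= (1 - rj) * (1 - y) / (y * (ri + rj + rk - 1) + (1 - rj) - rk)) by (apply Rdiv_nonneg; nra).
  assert ((1 - rj) * (1 - y) / (y * (ri + rj + rk - 1) + (1 - rj) - rk) <= 1) by (apply Rdiv_le_l; nra).
  split; [lra|]. field. split; [lra|].
  assert (0 < (1 - rj) * (y * (ri + rj + rk - 1) + (1 - rj) - rk)) by (apply Rmult_lt_0_compat; lra).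
  assert (0 <= (ri + rj + rk - 1) * ((1 - rj) * (1 - y))) by (apply Rmult_le_pos; [lra | apply Rmult_le_pos; lra]).
  lra.
Qed.

Lemma mapL_between a b y : 0 <= a <= 1 -> 0 <= b <= 1 ->
  between (mapL ri rj rk a) (mapL ri rj rk b) y -> exists x, between a b x /\ mapL ri rj rk x = y.
Proof. apply decreasing_between_preimage; [apply mapL_decreasing | apply mapL_onto]. Qed.

Lemma mapR_between a b y : 0 <= a <= 1 -> 0 <= b <= 1 ->
  between (mapR ri rj rk a) (mapR ri rj rk b) y -> exists x, between a b x /\ mapR ri rj rk x = y.
Proof. apply decreasing_between_preimage; [apply mapR_decreasing | apply mapR_onto]. Qed.

Lemma hgap_mapL a b : 0 < a < 1 -> 0 < b < 1 ->
  hgap (mapL ri rj rk a) (mapL ri rj rk b) = hgap a b * gainL rj rk a * gainL rj rk b.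
Proof.
  intros Ha Hb. pose proof (denom_ge (1 - a) ltac:(lra)). pose proof (denom_ge (1 - b) ltac:(lra)).
  assert (0 < (1 - rj) * a + rk * (1 - a)) by nra.
  assert (0 < (1 - rj) * b + rk * (1 - b)) by nra.
  unfold hgap, gainL, mapL, excess in *. field. repeat split; try lra; nra.
Qed.

Lemma hgap_mapR a b : 0 < a < 1 -> 0 < b < 1 ->
  hgap (mapR ri rj rk a) (mapR ri rj rk b) = hgap a b * gainR rj rk a * gainR rj rk b.
Proof.
  intros Ha Hb. pose proof (denom_ge a ltac:(lra)). pose proof (denom_ge b ltac:(lra)).
  assert (0 < (1 - rj) * (1 - a) + rk * a) by nra.
  assert (0 < (1 - rj) * (1 - b) + rk * b) by nra.
  unfold hgap, gainR, mapR, excess in *. field. repeat split; try lra; nra.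
Qed.

End EdgeMaps.

Lemma mapL_eq_mapR ri rj rk x y : 0 < ri < 1 -> 0 < rj < 1 -> 0 < rk < 1 -> ri + rj + rk > 1 ->
  0 <= x <= 1 -> 0 <= y <= 1 -> mapL ri rj rk x = mapR rk rj ri y -> x = 0 /\ y = 1.
Proof.
  intros Hi Hj Hk Hs Hx Hy E.
  assert (E0 : mapL ri rj rk 0 = mapR rk rj ri 1) by (unfold mapL, mapR, excess; field; lra).
  assert (HL : x <> 0 -> mapL ri rj rk x < mapL ri rj rk 0)
    by (intros; apply mapL_decreasing; auto; lra).
  assert (HR : y <> 1 -> mapR rk rj ri 1 < mapR rk rj ri y)
    by (intros; apply mapR_decreasing; auto; lra).
  destruct (Req_dec x 0) as [Hx0|Hx0], (Req_dec y 1) as [Hy1|Hy1]; [split; auto | exfalso ..].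
  - specialize (HR Hy1). subst. lra.
  - specialize (HL Hx0). subst. lra.
  - specialize (HL Hx0). specialize (HR Hy1). lra.
Qed.

Lemma hgap_nonneg a b : 0 < a < 1 -> 0 < b < 1 -> 0 <= hgap a b.
Proof.
  intros. apply Rdiv_nonneg; [apply pow2_ge_0|].
  apply Rmult_lt_0_compat; apply Rmult_lt_0_compat; lra.
Qed.

Lemma sqr_sub_le_hgap a b : 0 < a < 1 -> 0 < b < 1 -> (a - b)^2 <= hgap a b.
Proof.
  intros. apply Rdiv_le_r; [apply Rmult_lt_0_compat; apply Rmult_lt_0_compat; lra|].
  assert (0 <= (a - b)^2) by apply pow2_ge_0.
  assert (0 < a * (1 - a) <= 1) by (split; nra).
  assert (0 < b * (1 - b) <= 1) by (split; nra).
  assert (a * (1 - a) * (b * (1 - b)) <= 1) by (rewrite <- (Rmult_1_l 1); apply Rmult_le_compat; lra).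
  rewrite <- (Rmult_1_r ((a - b)^2)) at 2. apply Rmult_le_compat_l; lra.
Qed.

Lemma gain_le c rk x t eta : 0 < c <= 1 -> 0 < rk -> 0 < x -> 0 < t ->
   0 < eta -> c * x * eta <= rk * t -> 0 <= c * x / (c * x + rk * t) <= 1 / (1 + eta).
Proof.
  intros. split.
  - apply Rdiv_nonneg; nra.
  - apply Rdiv_le_l; [nra|].
    replace (1 / (1 + eta) * (c * x + rk * t)) with ((c * x + rk * t) / (1 + eta)) by (field; lra).
    apply Rdiv_le_r; nra.
Qed.

Lemma gainL_le rj rk x dd eta : 0 < rj < 1 -> 0 < rk -> 0 < x <= dd -> dd < 1 ->
  0 < eta <= rk * (1 - dd) -> 0 <= gainL rj rk x <= 1 / (1 + eta).
Proof.
  intros. unfold gainL. apply gain_le; try lra.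
  assert (0 < (1 - rj) * x <= 1) by (split; nra).
  assert ((1 - rj) * x * eta <= eta) by nra.
  assert (rk * (1 - dd) <= rk * (1 - x)) by nra. lra.
Qed.

Lemma gainR_le rj rk x dd eta : 0 < rj < 1 -> 0 < rk -> 0 < dd <= x -> x < 1 ->
  0 < eta <= rk * dd -> 0 <= gainR rj rk x <= 1 / (1 + eta).
Proof.
  intros. unfold gainR. apply gain_le; try lra.
  assert (0 < (1 - rj) * (1 - x) <= 1) by (split; nra).
  assert ((1 - rj) * (1 - x) * eta <= eta) by nra.
  assert (rk * dd <= rk * x) by nra. lra.
Qed.

Definition prev (i : idx) := succ (succ i).

Lemma succ_prev i : succ (prev i) = i.
Proof. destruct i; reflexivity. Qed.

Lemma param_self a i : param a i i = 0.
Proof. destruct i; reflexivity. Qed.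

Lemma param_prev a i : param a i (prev i) = a.
Proof. destruct i; reflexivity. Qed.

Lemma param_inj a i x i' : 0 <= a <= 1 -> 0 <= x <= 1 -> param a i = param x i' ->
  (i' = i /\ x = a) \/ (a = 0 /\ i' = prev i /\ x = 1) \/ (a = 1 /\ i' = succ i /\ x = 0).
Proof.
  intros Ha Hx H.
  pose proof (equal_f H I1). pose proof (equal_f H I2). pose proof (equal_f H I3).
  destruct i, i'; unfold param, prev in *; simpl in *;
  first [ left; split; [reflexivity | lra]
        | right; left; split; [lra | split; [reflexivity | lra]]
        | right; right; split; [lra | split; [reflexivity | lra]]
        | exfalso; lra ].
Qed.

Lemma param_inj_edge a b e : 0 <= a <= 1 -> 0 <= b <= 1 -> param a e = param b e -> a = b.
Proof.
  intros Ha Hb E. destruct (param_inj a e b e Ha Hb E) as [[_ ?]|[[_ [E2 _]]|[_ [E2 _]]]]; auto;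
  destruct e; discriminate.
Qed.

Lemma param_inj_interior a i b j : param a i = param b j -> 0 < a < 1 -> 0 <= b <= 1 -> j = i /\ b = a.
Proof. intros E Ha Hb. destruct (param_inj a i b j ltac:(lra) Hb E) as [H|[H|H]]; auto; lra. Qed.

Lemma sum_rho_cyclic (rho : idx -> R) i :
  rho i + rho (succ i) + rho (prev i) = rho I1 + rho I2 + rho I3.
Proof. destruct i; simpl; unfold prev; simpl; ring. Qed.

Definition edge_map (rho : idx -> R) i (s : bool) x :=
  if s then mapL (rho i) (rho (succ i)) (rho (prev i)) x
  else mapR (rho i) (rho (prev i)) (rho (succ i)) x.
Definition edge_target i (s : bool) := if s then succ i else prev i.
Definition on_side (d : idx -> R) i (s : bool) x := if s then x <= d i else d i <= x.

Definition PFree rho d i a b := forall x, between a b x -> ~ InP rho d (param x i).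

Lemma not_InClosureP_sep rho d z : ~ InClosureP rho d z ->
  exists eps, 0 < eps /\ forall p, InP rho d p -> eps <= dist1 z p.
Proof.
  intros H. apply not_all_ex_not in H. destruct H as [eps H].
  apply imply_to_and in H. destruct H as [He H].
  exists eps. split; auto. intros p Hp. destruct (Rle_dec eps (dist1 z p)); auto.
  exfalso. apply H. exists p. split; auto. lra.
Qed.

Section Dynamics.
Variables rho d : idx -> R.
Hypothesis Hrho : forall i, 0 < rho i < 1.
Hypothesis Hsum : rho I1 + rho I2 + rho I3 > 1.
Hypothesis Hd : forall i, 0 < d i < 1.

Local Ltac rho_facts i :=
  pose proof (sum_rho_cyclic rho i); pose proof (Hrho i); pose proof (Hrho (succ i));
  pose proof (Hrho (prev i)).

Lemma f_param x i s : 0 <= x <= 1 ->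
  Defs.f rho (edge_target i s) (param x i) = param (edge_map rho i s x) (edge_target i s).
Proof.
  intros Hx. pose proof (Hrho I1). pose proof (Hrho I2). pose proof (Hrho I3).
  apply functional_extensionality; intros l.
  destruct i, s, l; unfold Defs.f, param, edge_map, edge_target, prev, mapL, mapR, theta, excess; simpl;
   try field; try lra; nra.
Qed.

Lemma edge_map_range a i s : 0 <= a <= 1 -> on_side d i s a -> 0 < edge_map rho i s a < 1.
Proof.
  intros Ha Hs. pose proof (Hd i). rho_facts i.
  destruct s; simpl in *; [apply mapL_range | apply mapR_range]; lra.
Qed.

Lemma edge_map_between i s a b y : 0 <= a <= 1 -> 0 <= b <= 1 ->
  between (edge_map rho i s a) (edge_map rho i s b) y -> exists x, between a b x /\ edge_map rho i s x = y.
Proof. rho_facts i. destruct s; simpl; [apply mapL_between | apply mapR_between]; lra. Qed.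

Lemma edge_map_lipschitz i s : exists L, forall a b, 0 <= a <= 1 -> 0 <= b <= 1 ->
  Rabs (edge_map rho i s a - edge_map rho i s b) <= L * Rabs (a - b).
Proof.
  rho_facts i. destruct s; simpl; eexists; intros;
    [apply mapL_lipschitz | apply mapR_lipschitz]; auto; lra.
Qed.

Lemma edge_map_inj i s x y : 0 <= x <= 1 -> 0 <= y <= 1 -> edge_map rho i s x = edge_map rho i s y -> x = y.
Proof.
  intros Hx Hy E. rho_facts i.
  assert (Hdec : forall u v, 0 <= u -> u < v -> v <= 1 -> edge_map rho i s v < edge_map rho i s u)
    by (destruct s; simpl; [apply mapL_decreasing | apply mapR_decreasing]; lra).
  destruct (Rtotal_order x y) as [Hl|[He|Hg]]; auto.
  - pose proof (Hdec x y ltac:(lra) Hl ltac:(lra)). lra.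
  - pose proof (Hdec y x ltac:(lra) Hg ltac:(lra)). lra.
Qed.

Lemma step_source z z' : Step rho d z z' -> exists a i, 0 <= a <= 1 /\ z = param a i.
Proof. intros [j [[i [x [[Hx Hz] _]]] _]]. eauto. Qed.

Lemma step_param_inv a i w : 0 <= a <= 1 -> Step rho d (param a i) w ->
  exists s, on_side d i s a /\ w = param (edge_map rho i s a) (edge_target i s).
Proof.
  intros Ha [j [[i0 [x0 [[Hx0 Hz] Hr]]] [_ Hw]]].
  pose proof (Hd i0). pose proof (Hd i). subst w.
  destruct (param_inj a i x0 i0 Ha Hx0 Hz) as [[-> ->]|[[-> [-> ->]]|[-> [-> ->]]]].
  - destruct Hr as [[Hlt ->]|[[Hgt ->]|[Heq [-> | ->]]]];
      [exists true | exists false | exists true | exists false]; split; try (simpl; lra);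
      [apply (f_param a i true Ha) | apply (f_param a i false Ha)
      | apply (f_param a i true Ha) | apply (f_param a i false Ha)].
  - destruct Hr as [[Hlt ->]|[[Hgt ->]|[Heq _]]]; try lra.
    exists true. split; [simpl; lra|].
    replace (succ (succ (prev i))) with (edge_target i true) by (destruct i; reflexivity).
    apply f_param; auto.
  - destruct Hr as [[Hlt ->]|[[Hgt ->]|[Heq _]]]; try lra.
    exists false. split; [simpl; lra|]. apply (f_param 1 i false Ha).
Qed.

Lemma step_param a i s : 0 <= a <= 1 -> on_side d i s a ->
  Step rho d (param a i) (param (edge_map rho i s a) (edge_target i s)).
Proof.
  intros Ha Hs. pose proof (Hd i).
  exists (edge_target i s). split; [|split].
  - exists i, a. split; [split; auto|].
    destruct s; simpl in Hs; simpl;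
      destruct (Rtotal_order a (d i)) as [Hl|[He|Hg]]; auto; lra.
  - intros [_ [H0 _]]. destruct s, i; unfold param, edge_target, prev in *; simpl in *; lra.
  - symmetry. apply f_param; auto.
Qed.

Lemma step_target_interior z z' : Step rho d z z' -> exists y j, 0 < y < 1 /\ z' = param y j.
Proof.
  intros H. destruct (step_source z z' H) as [a [i [Ha ->]]].
  destruct (step_param_inv a i z' Ha H) as [s [Hs ->]].
  exists (edge_map rho i s a), (edge_target i s). split; auto. apply edge_map_range; auto.
Qed.

Lemma trajectory_interior tr t : Trajectory rho d tr -> (1 <= t)%nat ->
  exists x e, 0 < x < 1 /\ tr t = param x e.
Proof.
  intros T Ht. pose proof (T (t - 1)%nat) as S1. replace (S (t - 1)) with t in S1 by lia.
  exact (step_target_interior _ _ S1).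
Qed.

Definition greedy_move (p : idx * R) : idx * R :=
  let (e, x) := p in
  let s := if Rle_dec x (d e) then true else false in (edge_target e s, edge_map rho e s x).

Lemma trajectory_exists a i : 0 <= a <= 1 -> exists tr, Trajectory rho d tr /\ tr O = param a i.
Proof.
  intros Ha. set (g := fun n => Nat.iter n greedy_move (i, a)).
  assert (Hg : forall n, 0 <= snd (g n) <= 1).
  { induction n as [|n IH]; [exact Ha|].
    change (g (S n)) with (greedy_move (g n)). destruct (g n) as [e x]. unfold greedy_move.
    cbn [snd] in *. destruct (Rle_dec x (d e)) as [Hle|Hgt];
      [pose proof (edge_map_range x e true IH Hle) | pose proof (edge_map_range x e false IH ltac:(simpl; lra))];
      cbn [snd]; lra. }
  exists (fun n => param (snd (g n)) (fst (g n))). split; [|reflexivity].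
  intros t. change (g (S t)) with (greedy_move (g t)). pose proof (Hg t).
  destruct (g t) as [e x]. unfold greedy_move. cbn [fst snd] in *.
  destruct (Rle_dec x (d e)); apply step_param; simpl; auto; lra.
Qed.

Lemma trajectory_of_step z z' : Step rho d z z' -> exists tr, Trajectory rho d tr /\ tr O = z'.
Proof.
  intros H. destruct (step_target_interior z z' H) as [y [j [Hy ->]]].
  apply trajectory_exists. lra.
Qed.

Definition tr_cons (z : pt) (tr : nat -> pt) : nat -> pt :=
  fun n => match n with O => z | S n => tr n end.

Lemma trajectory_cons z tr : Trajectory rho d tr -> Step rho d z (tr O) ->
  Trajectory rho d (tr_cons z tr).
Proof. intros Ht Hs [|t]; simpl; auto. Qed.

Lemma InP_step_back z z' : Step rho d z z' -> InP rho d z' -> InP rho d z.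
Proof.
  intros Hs HP. right.
  destruct HP as [Hdp | [p [Hp [tr' [Ht' [H0' [t [Ht1 Htp]]]]]]]].
  - destruct (trajectory_of_step z z' Hs) as [tr [Ht H0]].
    exists z'. split; auto. exists (tr_cons z tr).
    split; [apply trajectory_cons; [auto | rewrite H0; auto]|]. split; [reflexivity|].
    exists 1%nat. split; [lia | exact H0].
  - exists p. split; auto. exists (tr_cons z tr').
    split; [apply trajectory_cons; [auto | rewrite H0'; auto]|]. split; [reflexivity|].
    exists (S t). split; [lia | exact Htp].
Qed.

Lemma InP_trajectory_back tr n k : Trajectory rho d tr -> InP rho d (tr (n + k)%nat) -> InP rho d (tr n).
Proof.
  intros Ht. revert n. induction k as [|k IH]; intros n H.
  - rewrite Nat.add_0_r in H; auto.
  - apply InP_step_back with (tr (S n)); auto. apply IH. rewrite Nat.add_succ_comm. auto.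
Qed.

Lemma decision_point_InP i : InP rho d (param (d i) i).
Proof. left. exists i. reflexivity. Qed.

(* Both ends of a [P]-free segment use the same branch, since the decision point is in [P];
   and a point of [P] in the image segment would have a preimage in [P] on the segment. *)
Lemma PFree_step i a b z' w' : 0 <= a <= 1 -> 0 <= b <= 1 -> PFree rho d i a b ->
  Step rho d (param a i) z' -> Step rho d (param b i) w' ->
  exists s, on_side d i s a /\ on_side d i s b /\
    z' = param (edge_map rho i s a) (edge_target i s) /\ w' = param (edge_map rho i s b) (edge_target i s) /\
    PFree rho d (edge_target i s) (edge_map rho i s a) (edge_map rho i s b).
Proof.
  intros Ha Hb HN Hz Hw.
  assert (Hnd : ~ between a b (d i)) by (intros Hb'; apply (HN _ Hb'), decision_point_InP).
  destruct (step_param_inv a i z' Ha Hz) as [s [Hsa ->]].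
  destruct (step_param_inv b i w' Hb Hw) as [s' [Hsb ->]].
  assert (s' = s) as ->.
  { destruct s, s'; auto; exfalso; apply Hnd; unfold between; simpl in *; lra. }
  exists s. do 4 (split; auto).
  intros y Hy HP.
  destruct (edge_map_between i s a b y Ha Hb Hy) as [x [Hx Hxy]].
  assert (Hx01 : 0 <= x <= 1) by (unfold between in Hx; lra).
  assert (Hsx : on_side d i s x) by (destruct s; unfold between in Hx; simpl in *; lra).
  apply (HN x Hx), InP_step_back with (param y (edge_target i s)); auto.
  rewrite <- Hxy. apply step_param; auto.
Qed.

Lemma PFree_iter tr1 tr2 a b i : Trajectory rho d tr1 -> Trajectory rho d tr2 ->
  tr1 O = param a i -> tr2 O = param b i -> 0 <= a <= 1 -> 0 <= b <= 1 -> PFree rho d i a b ->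
  forall n, exists e x y, 0 <= x <= 1 /\ 0 <= y <= 1 /\ tr1 n = param x e /\ tr2 n = param y e /\
     PFree rho d e x y /\ ((0 < n)%nat -> 0 < x < 1 /\ 0 < y < 1).
Proof.
  intros T1 T2 H1 H2 Ha Hb HN n. induction n as [|n IH].
  - exists i, a, b. repeat split; auto; try lra; intros; lia.
  - destruct IH as [e [x [y [Hx [Hy [E1 [E2 [HN' _]]]]]]]].
    pose proof (T1 n) as S1. pose proof (T2 n) as S2. rewrite E1 in S1. rewrite E2 in S2.
    destruct (PFree_step e x y _ _ Hx Hy HN' S1 S2) as [s [Hsx [Hsy [F1 [F2 HN2]]]]].
    pose proof (edge_map_range x e s Hx Hsx). pose proof (edge_map_range y e s Hy Hsy).
    exists (edge_target e s), (edge_map rho e s x), (edge_map rho e s y). repeat split; auto; lra.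
Qed.

Definition rho_min := Rmin (Rmin (rho I1) (rho I2)) (rho I3).
Definition d_margin := Rmin (Rmin (Rmin (d I1) (1 - d I1)) (Rmin (d I2) (1 - d I2))) (Rmin (d I3) (1 - d I3)).
Definition rate := 1 / (1 + rho_min * d_margin).

Lemma rho_min_spec : 0 < rho_min /\ forall k, rho_min <= rho k.
Proof.
  pose proof (Hrho I1). pose proof (Hrho I2). pose proof (Hrho I3). unfold rho_min.
  split; [repeat apply Rmin_glb_lt; lra|]. intros k; destruct k; unfold Rmin; repeat destruct Rle_dec; lra.
Qed.

Lemma d_margin_spec : 0 < d_margin /\ forall i, d_margin <= d i /\ d_margin <= 1 - d i.
Proof.
  pose proof (Hd I1). pose proof (Hd I2). pose proof (Hd I3). unfold d_margin.
  split; [repeat apply Rmin_glb_lt; lra|]. intros i; destruct i; unfold Rmin; repeat destruct Rle_dec; lra.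
Qed.

Lemma rate_range : 0 < rate < 1.
Proof.
  destruct rho_min_spec, d_margin_spec. unfold rate.
  assert (0 < rho_min * d_margin) by nra.
  split; [apply Rdiv_lt_0_compat | apply Rdiv_lt_l]; lra.
Qed.

Lemma edge_map_contraction i s a b : 0 < a < 1 -> 0 < b < 1 -> on_side d i s a -> on_side d i s b ->
  hgap (edge_map rho i s a) (edge_map rho i s b) <= hgap a b * (rate * rate).
Proof.
  intros Ha Hb Hsa Hsb. rho_facts i. pose proof (Hd i).
  pose proof (hgap_nonneg a b Ha Hb).
  destruct rho_min_spec as [Hm Hmk]. destruct d_margin_spec as [Hg Hgi].
  set (eta := rho_min * d_margin).
  assert (Heta : 0 < eta /\ forall k, eta <= rho k * d i /\ eta <= rho k * (1 - d i)).
  { split; [unfold eta; nra|]. intros k. specialize (Hmk k). specialize (Hgi i).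
    unfold eta; split; apply Rmult_le_compat; lra. }
  destruct Heta as [He Hek].
  change rate with (1 / (1 + eta)).
  assert (0 < 1 / (1 + eta)) by (apply Rdiv_lt_0_compat; lra).
  assert (Hprod : forall g1 g2, 0 <= g1 <= 1 / (1 + eta) -> 0 <= g2 <= 1 / (1 + eta) ->
            hgap a b * g1 * g2 <= hgap a b * (1 / (1 + eta) * (1 / (1 + eta)))).
  { intros. rewrite Rmult_assoc. apply Rmult_le_compat_l; auto. apply Rmult_le_compat; lra. }
  destruct s; simpl in *.
  - rewrite hgap_mapL by lra. pose proof (Hek (prev i)).
    apply Hprod; [apply (gainL_le _ _ a (d i)) | apply (gainL_le _ _ b (d i))]; lra.
  - rewrite hgap_mapR by lra. pose proof (Hek (succ i)).
    apply Hprod; [apply (gainR_le _ _ a (d i)) | apply (gainR_le _ _ b (d i))]; lra.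
Qed.

Lemma PFree_contraction tr1 tr2 a b i : Trajectory rho d tr1 -> Trajectory rho d tr2 ->
  tr1 O = param a i -> tr2 O = param b i -> 0 < a < 1 -> 0 < b < 1 -> PFree rho d i a b ->
  forall n, exists e x y, 0 < x < 1 /\ 0 < y < 1 /\ tr1 n = param x e /\ tr2 n = param y e /\
     PFree rho d e x y /\ hgap x y <= hgap a b * (rate * rate) ^ n.
Proof.
  intros T1 T2 H1 H2 Ha Hb HN n. induction n as [|n IH].
  - exists i, a, b. simpl. repeat split; auto; lra.
  - destruct IH as [e [x [y [Hx [Hy [E1 [E2 [HN' Hgap]]]]]]]].
    pose proof (T1 n) as S1. pose proof (T2 n) as S2. rewrite E1 in S1. rewrite E2 in S2.
    destruct (PFree_step e x y _ _ ltac:(lra) ltac:(lra) HN' S1 S2) as [s [Hsx [Hsy [F1 [F2 HN2]]]]].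
    pose proof (edge_map_contraction e s x y Hx Hy Hsx Hsy).
    pose proof (edge_map_range x e s ltac:(lra) Hsx). pose proof (edge_map_range y e s ltac:(lra) Hsy).
    exists (edge_target e s), (edge_map rho e s x), (edge_map rho e s y).
    repeat split; auto; try lra.
    assert (0 <= rate * rate) by (pose proof rate_range; nra).
    simpl. rewrite (Rmult_comm (rate * rate)), <- Rmult_assoc.
    eapply Rle_trans; [eassumption | apply Rmult_le_compat_r; auto].
Qed.

Lemma trajectory_shift tr k : Trajectory rho d tr -> Trajectory rho d (fun n => tr (k + n)%nat).
Proof. intros T n. rewrite Nat.add_succ_r. apply T. Qed.

Lemma PFree_dist_bound tr1 tr2 a b i : Trajectory rho d tr1 -> Trajectory rho d tr2 ->
  tr1 O = param a i -> tr2 O = param b i -> 0 <= a <= 1 -> 0 <= b <= 1 -> PFree rho d i a b ->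
  exists C, 0 <= C /\ forall n, dist1 (tr1 n) (tr2 n) <= C * rate ^ n.
Proof.
  intros T1 T2 E1 E2 Ha Hb HN. pose proof rate_range.
  destruct (PFree_iter tr1 tr2 a b i T1 T2 E1 E2 Ha Hb HN 1%nat) as [e [x [y [_ [_ [F1 [F2 [HN1 Hin]]]]]]]].
  destruct (Hin ltac:(lia)) as [Hx Hy].
  set (E := hgap x y). pose proof (hgap_nonneg x y Hx Hy).
  assert (Htail : forall n, dist1 (tr1 (S n)) (tr2 (S n)) <= sqrt E * rate ^ n).
  { intros n.
    destruct (PFree_contraction _ _ x y e (trajectory_shift tr1 1 T1) (trajectory_shift tr2 1 T2)
                F1 F2 Hx Hy HN1 n) as [e' [x' [y' [Hx' [Hy' [G1 [G2 [_ Hg]]]]]]]].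
    simpl in G1, G2. rewrite G1, G2, dist1_param.
    apply Rabs_le_of_sqr_le; [auto | lra |]. pose proof (sqr_sub_le_hgap x' y' Hx' Hy'). unfold E. lra. }
  exists (dist1 (tr1 O) (tr2 O) + sqrt E / rate).
  assert (0 <= sqrt E / rate) by (apply Rdiv_nonneg; [apply sqrt_pos | lra]).
  pose proof (dist1_nonneg (tr1 O) (tr2 O)).
  split; [lra|]. intros [|n].
  - simpl. lra.
  - eapply Rle_trans; [apply Htail|].
    replace (sqrt E * rate ^ n) with (sqrt E / rate * rate ^ S n) by (simpl; field; lra).
    apply Rmult_le_compat_r; [apply pow_le; lra | lra].
Qed.

Lemma PFree_dist_cv tr1 tr2 a b i : Trajectory rho d tr1 -> Trajectory rho d tr2 ->
  tr1 O = param a i -> tr2 O = param b i -> 0 <= a <= 1 -> 0 <= b <= 1 -> PFree rho d i a b ->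
  Un_cv (fun n => dist1 (tr1 n) (tr2 n)) 0.
Proof.
  intros. destruct (PFree_dist_bound tr1 tr2 a b i) as [C [HC Hbd]]; auto.
  apply Un_cv_0_squeeze with (fun n => C * rate ^ n).
  - apply Un_cv_geom_0. pose proof rate_range. lra.
  - intros n. split; [apply dist1_nonneg | apply Hbd].
Qed.

Lemma PFree_trajectory_unique tr1 tr2 b i : Trajectory rho d tr1 -> Trajectory rho d tr2 ->
  tr1 O = param b i -> tr2 O = param b i -> 0 <= b <= 1 -> PFree rho d i b b ->
  forall t, tr1 t = tr2 t.
Proof.
  intros T1 T2 E1 E2 Hb HN t. induction t as [|t IH]; [congruence|].
  destruct (PFree_iter tr1 tr2 b b i T1 T2 E1 E2 Hb Hb HN t) as [e [x [y [Hx [Hy [F1 [F2 [HN' _]]]]]]]].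
  assert (y = x) as -> by (apply (param_inj_edge y x e); congruence).
  pose proof (T1 t) as S1. pose proof (T2 t) as S2. rewrite F1 in S1. rewrite F2 in S2.
  destruct (PFree_step e x x _ _ Hx Hx HN' S1 S2) as [s [_ [_ [G1 [G2 _]]]]]. congruence.
Qed.

Lemma local_convergence z m u tr :
  ~ InClosureP rho d z -> Trajectory rho d tr -> tr O = z -> ConvergesOnto tr m u ->
  exists eps, 0 < eps /\ forall z', Nbhd eps z z' ->
    (exists tr', Trajectory rho d tr' /\ tr' O = z') /\
    (forall tr1 tr2, Trajectory rho d tr1 -> tr1 O = z' ->
       Trajectory rho d tr2 -> tr2 O = z' -> forall t, tr1 t = tr2 t) /\
    (forall tr', Trajectory rho d tr' -> tr' O = z' -> ConvergesOnto tr' m u).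
Proof.
  intros Hcl T E Hc.
  destruct (not_InClosureP_sep rho d z Hcl) as [eps [He Hp]].
  exists eps. split; auto. intros z' [i [x [x' [[Hx Ez] [[Hx' Ez'] Hxx]]]]].
  assert (HN : PFree rho d i x x').
  { intros y Hy HP. specialize (Hp _ HP). rewrite Ez, dist1_param in Hp.
    unfold between in Hy. unfold Rabs in *. repeat destruct Rcase_abs; lra. }
  assert (HN' : PFree rho d i x' x') by (intros y Hy; apply HN; unfold between in *; lra).
  split; [|split].
  - rewrite Ez'. apply trajectory_exists. auto.
  - intros tr1 tr2 T1 E1 T2 E2. apply (PFree_trajectory_unique tr1 tr2 x' i); auto; congruence.
  - intros tr' T' E'. apply converges_onto_transfer with tr; auto.
    apply (PFree_dist_cv tr tr' x x' i); auto; congruence.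
Qed.

Lemma orbit_trajectory m u n : PeriodicOrbit rho d m u -> (n < m)%nat ->
  Trajectory rho d (fun t => u ((n + t) mod m)%nat).
Proof.
  intros [Hm [Hs Hl]] Hn t.
  replace ((n + S t) mod m)%nat with (((n + t) mod m + 1) mod m)%nat
    by (rewrite Nat.Div0.add_mod_idemp_l; f_equal; lia).
  set (k := ((n + t) mod m)%nat).
  assert (Hk : (k < m)%nat) by (apply Nat.mod_upper_bound; lia).
  destruct (Nat.lt_ge_cases (k + 1) m).
  - rewrite Nat.mod_small by auto. rewrite Nat.add_1_r. apply Hs. lia.
  - replace k with (m - 1)%nat in * by lia. replace (m - 1 + 1)%nat with m by lia.
    rewrite Nat.Div0.mod_same. auto.
Qed.

Lemma orbit_converges m u n : PeriodicOrbit rho d m u -> (n < m)%nat ->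
  ConvergesOnto (fun t => u ((n + t) mod m)%nat) m u.
Proof.
  intros [Hm _] Hn. exists (m - n)%nat. intros k Hk.
  apply Un_cv_ext with (fun _ => 0); [|apply Un_cv_const].
  intros t. replace ((n + (m * t + k + (m - n))) mod m)%nat with k; [symmetry; apply dist1_diag|].
  replace (n + (m * t + k + (m - n)))%nat with (k + (t + 1) * m)%nat by nia.
  rewrite Nat.Div0.mod_add, Nat.mod_small; auto.
Qed.

Lemma periodic_orbit_stable m u : PeriodicOrbit rho d m u ->
  (forall n, (n < m)%nat -> ~ InClosureP rho d (u n)) -> Stable rho d m u.
Proof.
  intros Hpo Hcl n Hn.
  destruct (local_convergence (u n) m u (fun t => u ((n + t) mod m)%nat) (Hcl n Hn)
              (orbit_trajectory m u n Hpo Hn)) as [eps [He H]].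
  - simpl. rewrite Nat.add_0_r, Nat.mod_small; auto.
  - apply orbit_converges; auto.
  - exists eps. split; auto. intros z tr Hz T E. apply (H z Hz); auto.
Qed.

Lemma edge_map_cross i x y : 0 <= x <= 1 -> 0 <= y <= 1 ->
  edge_map rho i true x = edge_map rho (prev i) false y -> param x i = param y (prev i).
Proof.
  intros Hx Hy E. rho_facts i. simpl in E.
  replace (prev (prev i)) with (succ i) in E by (destruct i; reflexivity).
  rewrite succ_prev in E.
  destruct (mapL_eq_mapR (rho i) (rho (succ i)) (rho (prev i)) x y) as [-> ->]; auto; try lra.
  apply functional_extensionality; intros l; destruct i, l; unfold param, prev; simpl; ring.
Qed.

Lemma edge_target_eq i s i' s' : edge_target i s = edge_target i' s' ->
  (s' = s /\ i' = i) \/ (s = true /\ s' = false /\ i' = prev i) \/ (s = false /\ s' = true /\ i = prev i').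
Proof. destruct i, s, i', s'; simpl; unfold prev; simpl; intros H; try discriminate; auto. Qed.

Lemma step_backward_unique a b c : Step rho d a c -> Step rho d b c -> a = b.
Proof.
  intros S1 S2.
  destruct (step_source a c S1) as [x [i [Hx ->]]].
  destruct (step_source b c S2) as [y [i' [Hy ->]]].
  destruct (step_param_inv x i c Hx S1) as [s [Hs E1]].
  destruct (step_param_inv y i' c Hy S2) as [s' [Hs' E2]].
  pose proof (edge_map_range x i s Hx Hs) as Rx. pose proof (edge_map_range y i' s' Hy Hs') as Ry.
  rewrite E1 in E2. destruct (param_inj_interior _ _ _ _ E2 Rx ltac:(lra)) as [Et En].
  destruct (edge_target_eq i s i' s' (eq_sym Et)) as [[-> ->]|[[-> [-> ->]]|[-> [-> ->]]]].
  - f_equal. apply (edge_map_inj i s); auto.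
  - apply edge_map_cross; auto.
  - symmetry. apply edge_map_cross; auto.
Qed.

Definition edge_of (v : pt) : idx :=
  if Req_EM_T (v I1) 0 then I1 else if Req_EM_T (v I2) 0 then I2 else I3.

Definition lies_below (i : idx) (v p : pt) : bool :=
  if Req_EM_T (p i) 0 then (if Rlt_dec (p (prev i)) (v (prev i)) then true else false) else false.

(* For a finite [P] listed by [Lp], points outside [P] with the same key lie on the same edge
   between the same two consecutive points of [P]. *)
Definition pfree_key (Lp : list pt) (v : pt) : idx * nat :=
  (edge_of v, length (filter (lies_below (edge_of v) v) Lp)).

Definition key_range (Lp : list pt) := list_prod (I1 :: I2 :: I3 :: nil) (seq 0 (S (length Lp))).

Lemma edge_of_param a i : 0 < a < 1 -> edge_of (param a i) = i.
Proof. intros Ha. unfold edge_of. destruct i; unfold param; simpl; repeat destruct Req_EM_T; auto; lra. Qed.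

Lemma pfree_key_in_range Lp v : In (pfree_key Lp v) (key_range Lp).
Proof.
  apply in_prod; [destruct (edge_of v); simpl; auto|].
  apply in_seq. pose proof (filter_length_le (lies_below (edge_of v) v) Lp). lia.
Qed.

Lemma pfree_key_PFree Lp a b i j : (forall p, InP rho d p -> In p Lp) ->
  0 < a < 1 -> 0 < b < 1 -> ~ InP rho d (param a i) -> ~ InP rho d (param b j) ->
  pfree_key Lp (param a i) = pfree_key Lp (param b j) -> j = i /\ PFree rho d i a b.
Proof.
  intros HL Ha Hb Pa Pb E. unfold pfree_key in E. rewrite !edge_of_param in E by auto.
  injection E as Hij Ec. subst j. split; auto.
  intros y Hy HP.
  assert (y <> a) by (intros ->; auto). assert (y <> b) by (intros ->; auto).
  assert (Hcnt : forall u w, u < y -> y < w ->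
            (length (filter (lies_below i (param u i)) Lp) < length (filter (lies_below i (param w i)) Lp))%nat).
  { intros u w Hu Hw. apply filter_length_mono_strict.
    - intros p _. unfold lies_below. rewrite !param_prev.
      repeat destruct Req_EM_T; repeat destruct Rlt_dec; auto; lra.
    - exists (param y i). split; [apply HL; auto|]. unfold lies_below.
      rewrite !param_prev, param_self. destruct Req_EM_T; [|lra].
      split; repeat destruct Rlt_dec; auto; lra. }
  unfold between in Hy. destruct (Rlt_dec a b).
  - specialize (Hcnt a b ltac:(lra) ltac:(lra)). lia.
  - specialize (Hcnt b a ltac:(lra) ltac:(lra)). lia.
Qed.

Lemma periodic_point_interior m u n : PeriodicOrbit rho d m u -> (n < m)%nat ->
  exists x e, 0 < x < 1 /\ u n = param x e.
Proof.
  intros [Hm [Hs Hl]] Hn. destruct n as [|n].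
  - exact (step_target_interior _ _ Hl).
  - exact (step_target_interior _ _ (Hs n Hn)).
Qed.

Lemma orbit_index_period m (u : nat -> pt) n k : (n < m)%nat -> u ((n + k * m) mod m)%nat = u n.
Proof. intros Hn. rewrite Nat.Div0.mod_add, Nat.mod_small; auto. Qed.

Lemma PFree_periodic_eq m u n m' u' n' a b e :
  PeriodicOrbit rho d m u -> (n < m)%nat -> PeriodicOrbit rho d m' u' -> (n' < m')%nat ->
  u n = param a e -> u' n' = param b e -> 0 < a < 1 -> 0 < b < 1 -> PFree rho d e a b ->
  a = b.
Proof.
  intros P1 Hn P2 Hn' E1 E2 Ha Hb HN.
  assert (Hm : (1 <= m * m')%nat) by (destruct P1, P2; nia).
  assert (S1 : u ((n + 0) mod m)%nat = param a e) by (rewrite Nat.add_0_r, Nat.mod_small; auto).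
  assert (S2 : u' ((n' + 0) mod m')%nat = param b e) by (rewrite Nat.add_0_r, Nat.mod_small; auto).
  destruct (PFree_contraction _ _ a b e (orbit_trajectory m u n P1 Hn) (orbit_trajectory m' u' n' P2 Hn')
              S1 S2 Ha Hb HN (m * m')) as [e' [x [y [Hx [Hy [F1 [F2 [_ Hgap]]]]]]]].
  rewrite (Nat.mul_comm m m'), orbit_index_period, E1 in F1 by auto.
  rewrite orbit_index_period, E2 in F2 by auto.
  destruct (param_inj_interior a e x e' F1 Ha ltac:(lra)) as [-> ->].
  destruct (param_inj_interior b e y e F2 Hb ltac:(lra)) as [_ ->].
  pose proof rate_range.
  assert (Hq : (rate * rate) ^ (m * m') < 1) by (apply pow_lt_1_compat; [nra | lia]).
  pose proof (hgap_nonneg a b Ha Hb). pose proof (sqr_sub_le_hgap a b Ha Hb).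
  assert (hgap a b = 0) by nra.
  nra.
Qed.

Lemma periodic_points_finite (Lp : list pt) : (forall p, InP rho d p -> In p Lp) ->
  exists L : list pt, forall m u, PeriodicOrbit rho d m u -> forall n, (n < m)%nat -> In (u n) L.
Proof.
  intros HL.
  set (Per := fun v => exists m u n, PeriodicOrbit rho d m u /\ (n < m)%nat /\ u n = v).
  set (pick := fun k => epsilon (inhabits (param 0 I1)) (fun v => Per v /\ ~ InP rho d v /\ pfree_key Lp v = k)).
  exists (Lp ++ map pick (key_range Lp)).
  intros m u Hpo n Hn. apply in_or_app.
  destruct (classic (InP rho d (u n))) as [HP|HP]; [left; auto | right].
  apply in_map_iff. exists (pfree_key Lp (u n)). split; [|apply pfree_key_in_range].
  destruct (epsilon_spec (inhabits (param 0 I1)) (fun v => Per v /\ ~ InP rho d v /\ pfree_key Lp v = pfree_key Lp (u n)))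
    as [[m' [u' [n' [Hpo' [Hn' Ev]]]]] [Hv Hk]].
  { exists (u n). split; [exists m, u, n|]; auto. }
  fold (pick (pfree_key Lp (u n))) in *. rewrite <- Ev in *.
  destruct (periodic_point_interior m u n Hpo Hn) as [a [e [Ha Ea]]].
  destruct (periodic_point_interior m' u' n' Hpo' Hn') as [b [e' [Hb Eb]]].
  rewrite Ea, Eb in *.
  destruct (pfree_key_PFree Lp b a e' e HL Hb Ha Hv HP Hk) as [-> HN].
  f_equal. apply (PFree_periodic_eq m' u' n' m u n b a e'); auto.
Qed.

Lemma trajectory_backward_shift tr a b : Trajectory rho d tr -> tr a = tr b -> (a <= b)%nat ->
  forall x, (x <= a)%nat -> tr x = tr (x + (b - a))%nat.
Proof.
  intros T E Hab.
  assert (Hk : forall k, (k <= a)%nat -> tr (a - k)%nat = tr (b - k)%nat).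
  { induction k as [|k IH]; intros Hk; [rewrite !Nat.sub_0_r; auto|].
    pose proof (T (a - S k)%nat) as S1. pose proof (T (b - S k)%nat) as S2.
    replace (S (a - S k)) with (a - k)%nat in S1 by lia.
    replace (S (b - S k)) with (b - k)%nat in S2 by lia.
    rewrite IH in S1 by lia. exact (step_backward_unique _ _ _ S1 S2). }
  intros x Hx. specialize (Hk (a - x)%nat ltac:(lia)).
  replace (a - (a - x))%nat with x in Hk by lia. rewrite Hk. f_equal. lia.
Qed.

Lemma trajectory_periodic_of_finite tr (Lp : list pt) : Trajectory rho d tr ->
  (forall t, In (tr t) Lp) -> exists q, (1 <= q)%nat /\ forall x, tr x = tr (x + q)%nat.
Proof.
  intros T HL.
  destruct (bounded_witness_uniform
              (fun q T0 => (1 <= q)%nat /\ forall x, (x <= T0)%nat -> tr x = tr (x + q)%nat) (length Lp))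
    as [q [_ Hper]].
  - intros T0. destruct (pigeonhole_window pt tr Lp T0 (fun k _ => HL k)) as [a [b [H1 [H2 [H3 E]]]]].
    exists (b - a)%nat. split; [lia|]. split; [lia|].
    intros x Hx. apply (trajectory_backward_shift tr a b T E ltac:(lia) x ltac:(lia)).
  - intros q T0 T0' Hle [Hq HP]. split; auto. intros x Hx. apply HP. lia.
  - exists q. split; [apply (Hper O)|]. intros x. exact (proj2 (Hper x) x (le_n x)).
Qed.

Lemma periodic_trajectory_orbit tr q : Trajectory rho d tr -> (1 <= q)%nat ->
  (forall x, tr x = tr (x + q)%nat) -> PeriodicOrbit rho d q tr /\ ConvergesOnto tr q tr.
Proof.
  intros T Hq Hp. split.
  - split; auto. split; [intros n _; apply T|].
    pose proof (T (q - 1)%nat) as S1. replace (S (q - 1)) with (0 + q)%nat in S1 by lia.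
    rewrite <- Hp in S1. auto.
  - exists O. intros n Hn.
    assert (Hrep : forall t, tr (q * t + n + 0)%nat = tr n).
    { induction t as [|t IH]; [f_equal; lia|]. rewrite <- IH.
      replace (q * S t + n + 0)%nat with ((q * t + n + 0) + q)%nat by nia. symmetry. apply Hp. }
    apply Un_cv_ext with (fun _ => 0); [|apply Un_cv_const].
    intros t. rewrite Hrep. symmetry. apply dist1_diag.
Qed.

Lemma orbit_of_subsequence_limits (y : nat -> pt) p : (1 <= p)%nat ->
  (forall r, exists v w, Un_cv (fun k => dist1 (y (r + k * p)%nat) v) 0 /\
     Un_cv (fun k => dist1 (y (S r + k * p)%nat) w) 0 /\ Step rho d v w) ->
  exists u, PeriodicOrbit rho d p u /\ ConvergesOnto y p u.
Proof.
  intros Hp Hlim.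
  assert (Hex : forall r, exists v, Un_cv (fun k => dist1 (y (r + k * p)%nat) v) 0)
    by (intros r; destruct (Hlim r) as [v [w [Hv _]]]; eauto).
  set (V := fun r => proj1_sig (constructive_indefinite_description _ (Hex r))).
  assert (HV : forall r, Un_cv (fun k => dist1 (y (r + k * p)%nat) (V r)) 0)
    by (intros r; unfold V; destruct constructive_indefinite_description; auto).
  assert (HStep : forall r, Step rho d (V r) (V (S r))).
  { intros r. destruct (Hlim r) as [v [w [Hv [Hw Hs]]]].
    rewrite (Un_cv_dist1_unique _ _ _ (HV r) Hv), (Un_cv_dist1_unique _ _ _ (HV (S r)) Hw). auto. }
  assert (HVp : V p = V O).
  { apply (Un_cv_dist1_unique (fun k => y (0 + k * p)%nat)); [|apply HV].
    apply Un_cv_0_of_shift. exact (HV p). }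
  exists V. split.
  - split; auto. split; [intros n _; apply HStep|].
    pose proof (HStep (p - 1)%nat) as Hl. replace (S (p - 1)) with p in Hl by lia.
    rewrite HVp in Hl. auto.
  - exists O. intros n Hn. apply Un_cv_ext with (fun k => dist1 (y (n + k * p)%nat) (V n)); [|apply HV].
    intros k. do 2 f_equal. lia.
Qed.

Lemma PFree_chain_limit e (b : nat -> R) C : 0 <= C -> (forall k, 0 < b k < 1) ->
  (forall k, PFree rho d e (b k) (b (S k))) -> (forall k, Rabs (b k - b (S k)) <= C * rate ^ k) ->
  exists s beta, 0 <= beta <= 1 /\ on_side d e s beta /\ (forall k, on_side d e s (b k)) /\ Un_cv b beta.
Proof.
  intros HC Hb HN Hbd. pose proof (Hd e). pose proof rate_range.
  assert (Hnd : forall k, ~ between (b k) (b (S k)) (d e))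
    by (intros k Hbt; apply (HN k _ Hbt), decision_point_InP).
  assert (Hne : forall k, b k <> d e)
    by (intros k E; apply (HN k (b k) (between_l _ _)); rewrite E; apply decision_point_InP).
  set (s := if Rlt_dec (b O) (d e) then true else false).
  assert (Hside : forall k, if s then b k < d e else d e < b k).
  { induction k as [|k IH].
    - unfold s. destruct Rlt_dec; auto. pose proof (Hne O). lra.
    - pose proof (Hnd k). pose proof (Hne (S k)). unfold between in *. destruct s; lra. }
  destruct (R_complete b (geom_Cauchy_crit b C rate ltac:(lra) HC Hbd)) as [beta Hbeta].
  assert (Hlim : forall c, (forall k, b k <= c) -> beta <= c)
    by (intros c Hc; apply (Rle_cv_lim Hc Hbeta (Un_cv_const c))).
  assert (Hlim' : forall c, (forall k, c <= b k) -> c <= beta)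
    by (intros c Hc; apply (Rle_cv_lim Hc (Un_cv_const c) Hbeta)).
  exists s, beta. split; [split; [apply Hlim' | apply Hlim]; intros k; pose proof (Hb k); lra|].
  split; [|split; [intros k; specialize (Hside k); destruct s; simpl; lra | exact Hbeta]].
  destruct s; simpl; [apply Hlim | apply Hlim']; intros k; specialize (Hside k); simpl in Hside; lra.
Qed.

Lemma return_chain (y : nat -> pt) p :
  (forall n, exists e x x', 0 < x < 1 /\ 0 < x' < 1 /\ y n = param x e /\ y (n + p)%nat = param x' e /\
     PFree rho d e x x') ->
  forall r, exists e b, forall k, 0 < b k < 1 /\ y (r + k * p)%nat = param (b k) e /\ PFree rho d e (b k) (b (S k)).
Proof.
  intros Hchain r. destruct (Hchain r) as [e [c [_ [Hc [_ [Er _]]]]]].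
  set (b := fun k => y (r + k * p)%nat (prev e)).
  assert (Hb : forall k, 0 < b k < 1 /\ y (r + k * p)%nat = param (b k) e).
  { induction k as [|k [Hbk Ek]].
    - unfold b. simpl. rewrite Nat.add_0_r, Er, param_prev. auto.
    - destruct (Hchain (r + k * p)%nat) as [e' [x [x' [Hx [Hx' [F1 [F2 _]]]]]]].
      rewrite Ek in F1. destruct (param_inj_interior _ _ _ _ F1 Hbk ltac:(lra)) as [<- _].
      replace (r + k * p + p)%nat with (r + S k * p)%nat in F2 by lia.
      unfold b. rewrite F2, param_prev. auto. }
  exists e, b. intros k. destruct (Hb k) as [Hbk Ek]. destruct (Hb (S k)) as [Hbk' Ek'].
  split; [auto | split; [auto|]].
  destruct (Hchain (r + k * p)%nat) as [e' [x [x' [Hx [Hx' [F1 [F2 HN]]]]]]].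
  replace (r + k * p + p)%nat with (r + S k * p)%nat in F2 by lia.
  rewrite Ek in F1. rewrite Ek' in F2.
  destruct (param_inj_interior _ _ _ _ F1 Hbk ltac:(lra)) as [<- <-].
  destruct (param_inj_interior _ _ _ _ F2 Hbk' ltac:(lra)) as [_ <-]. auto.
Qed.

Lemma return_subsequence_limits (y : nat -> pt) p C : Trajectory rho d y -> (1 <= p)%nat -> 0 <= C ->
  (forall n, exists e x x', 0 < x < 1 /\ 0 < x' < 1 /\ y n = param x e /\ y (n + p)%nat = param x' e /\
     PFree rho d e x x') ->
  (forall n, dist1 (y n) (y (n + p)%nat) <= C * rate ^ n) ->
  forall r, exists v w, Un_cv (fun k => dist1 (y (r + k * p)%nat) v) 0 /\
    Un_cv (fun k => dist1 (y (S r + k * p)%nat) w) 0 /\ Step rho d v w.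
Proof.
  intros T Hp HC Hchain Hbd r. pose proof rate_range.
  destruct (return_chain y p Hchain r) as [e [b Hb]].
  assert (Hgeom : forall k, Rabs (b k - b (S k)) <= C * rate ^ k).
  { intros k. destruct (Hb k) as [_ [E1 _]]. destruct (Hb (S k)) as [_ [E2 _]].
    rewrite <- dist1_param with (i := e), <- E1, <- E2.
    replace (r + S k * p)%nat with (r + k * p + p)%nat by lia.
    eapply Rle_trans; [apply Hbd|]. apply Rmult_le_compat_l; auto.
    apply pow_le_pow_of_le_1; [lra | nia]. }
  destruct (PFree_chain_limit e b C HC (fun k => proj1 (Hb k)) (fun k => proj2 (proj2 (Hb k))) Hgeom)
    as [s [beta [Hbeta [Hsb [Hsk Hcv]]]]].
  assert (Hnext : forall k, y (S r + k * p)%nat = param (edge_map rho e s (b k)) (edge_target e s)).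
  { intros k. destruct (Hb k) as [Hbk [Ek HN]]. pose proof (T (r + k * p)%nat) as St.
    rewrite Ek in St. replace (S (r + k * p)) with (S r + k * p)%nat in St by lia.
    destruct (step_param_inv (b k) e _ ltac:(lra) St) as [s' [Hs' ->]].
    replace s' with s; auto. specialize (Hsk k).
    destruct s, s'; simpl in *; auto; exfalso; apply (HN (b k) (between_l _ _));
      replace (b k) with (d e) by lra; apply decision_point_InP. }
  exists (param beta e), (param (edge_map rho e s beta) (edge_target e s)). split; [|split].
  - apply Un_cv_ext with (fun k => 1 * Rabs (b k - beta)); [|apply Un_cv_0_dist; auto].
    intros k. destruct (Hb k) as [_ [E1 _]]. rewrite E1, dist1_param. ring.
  - destruct (edge_map_lipschitz e s) as [L HL].
    apply Un_cv_0_squeeze with (fun k => L * Rabs (b k - beta)); [apply Un_cv_0_dist; auto|].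
    intros k. split; [apply dist1_nonneg|]. rewrite Hnext, dist1_param.
    destruct (Hb k). apply HL; lra.
  - apply step_param; auto.
Qed.

Lemma converges_onto_shift tr a m u : ConvergesOnto (fun n => tr (a + n)%nat) m u -> ConvergesOnto tr m u.
Proof.
  intros [n0 Hc]. exists (a + n0)%nat. intros n Hn.
  apply Un_cv_ext with (fun t => dist1 (tr (a + (m * t + n + n0))%nat) (u n)); [|apply Hc; auto].
  intros t. do 2 f_equal. lia.
Qed.

Lemma converges_of_leaving_P tr Lp t0 : Trajectory rho d tr -> (forall p, InP rho d p -> In p Lp) ->
  ~ InP rho d (tr t0) -> exists m u, PeriodicOrbit rho d m u /\ ConvergesOnto tr m u.
Proof.
  intros T HL Ht0.
  assert (Hnp : forall t, (t0 <= t)%nat -> ~ InP rho d (tr t)).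
  { intros t Ht HP. apply Ht0, (InP_trajectory_back tr t0 (t - t0) T).
    replace (t0 + (t - t0))%nat with t by lia. auto. }
  destruct (pigeonhole_window _ (fun k => pfree_key Lp (tr k)) (key_range Lp) (S t0))
    as [a [b [H1 [H2 [H3 Ek]]]]]; [intros k _; apply pfree_key_in_range|].
  destruct (trajectory_interior tr a T ltac:(lia)) as [xa [ea [Hxa Ea]]].
  destruct (trajectory_interior tr b T ltac:(lia)) as [xb [eb [Hxb Eb]]].
  rewrite Ea, Eb in Ek.
  destruct (pfree_key_PFree Lp xa xb ea eb HL Hxa Hxb ltac:(rewrite <- Ea; apply Hnp; lia)
              ltac:(rewrite <- Eb; apply Hnp; lia) Ek) as [-> HN].
  set (p := (b - a)%nat). set (y := fun n => tr (a + n)%nat).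
  pose proof (trajectory_shift tr a T) as Ty. pose proof (trajectory_shift tr b T) as Ty'.
  assert (Eyy : forall n, tr (b + n)%nat = y (n + p)%nat) by (intros n; unfold y, p; f_equal; lia).
  assert (Ey0 : y O = param xa ea) by (unfold y; rewrite Nat.add_0_r; auto).
  assert (Ey0' : tr (b + 0)%nat = param xb ea) by (rewrite Nat.add_0_r; auto).
  destruct (PFree_dist_bound _ _ xa xb ea Ty Ty' Ey0 Ey0' ltac:(lra) ltac:(lra) HN) as [C [HC Hbd]].
  destruct (orbit_of_subsequence_limits y p ltac:(unfold p; lia)) as [u [Hu Hc]].
  - apply (return_subsequence_limits y p C Ty ltac:(unfold p; lia) HC).
    + intros n. destruct (PFree_contraction _ _ xa xb ea Ty Ty' Ey0 Ey0' Hxa Hxb HN n)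
        as [e [x [x' [Hx [Hx' [F1 [F2 [HN' _]]]]]]]].
      exists e, x, x'. rewrite <- Eyy. auto.
    + intros n. rewrite <- Eyy. apply Hbd.
  - exists p, u. split; auto. apply (converges_onto_shift tr a). exact Hc.
Qed.

Lemma trajectory_converges (Lp : list pt) : (forall p, InP rho d p -> In p Lp) ->
  forall tr, Trajectory rho d tr -> exists m u, PeriodicOrbit rho d m u /\ ConvergesOnto tr m u.
Proof.
  intros HL tr T. destruct (classic (forall t, InP rho d (tr t))) as [Hall|Hn].
  - destruct (trajectory_periodic_of_finite tr Lp T (fun t => HL _ (Hall t))) as [q [Hq Hp]].
    exists q, tr. apply periodic_trajectory_orbit; auto.
  - apply not_all_ex_not in Hn. destruct Hn as [t0 Ht0]. apply (converges_of_leaving_P tr Lp t0); auto.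
Qed.

End Dynamics.

Theorem lemma4p7 (rho d : idx -> R)
  (Hrho : forall i, 0 < rho i < 1)
  (Hsum : rho I1 + rho I2 + rho I3 > 1)
  (Hd : forall i, 0 < d i < 1) :
  (* (i) *)
  (FiniteP rho d ->
     (exists L : list pt, forall m u, PeriodicOrbit rho d m u ->
        forall n, (n < m)%nat -> In (u n) L) /\
     (forall tr, Trajectory rho d tr ->
        exists m u, PeriodicOrbit rho d m u /\ ConvergesOnto tr m u))
  /\
  (* (ii) *)
  (forall z m u tr,
     PeriodicOrbit rho d m u -> ~ InClosureP rho d z ->
     Trajectory rho d tr -> tr O = z -> ConvergesOnto tr m u ->
     exists eps, 0 < eps /\ forall z', Nbhd eps z z' ->
       (exists tr', Trajectory rho d tr' /\ tr' O = z') /\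
       (forall tr1 tr2, Trajectory rho d tr1 -> tr1 O = z' ->
          Trajectory rho d tr2 -> tr2 O = z' -> forall t, tr1 t = tr2 t) /\
       (forall tr', Trajectory rho d tr' -> tr' O = z' -> ConvergesOnto tr' m u))
  /\
  (* (iii) *)
  (forall m u, PeriodicOrbit rho d m u ->
     (forall n, (n < m)%nat -> ~ InClosureP rho d (u n)) ->
     Stable rho d m u).
Proof.
  split; [|split].
  - intros [Lp HL]. split.
    + exact (periodic_points_finite rho d Hrho Hsum Hd Lp HL).
    + exact (trajectory_converges rho d Hrho Hsum Hd Lp HL).
  - intros z m u tr _. exact (local_convergence rho d Hrho Hsum Hd z m u tr).
  - exact (periodic_orbit_stable rho d Hrho Hsum Hd).
Qed.
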